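(* $\mathcal{LUMI}^{S}_{\mathcal{F.V.}} > \mathcal{LUMI}^{S}_{\mathcal{L.V.}}$, i.e. the model $\mathcal{LUMI}$ under the semi-synchronous scheduler with full visibility is computationally more powerful than the model $\mathcal{LUMI}$ under the semi-synchronous scheduler with limited visibility.
   Context: Robots are anonymous, identical, autonomous computational entities viewed as points moving in the Euclidean plane. Each has its own local coordinate system, with no agreement between robots and no common chirality, and perceives itself at its origin. Robots operate in Look-Compute-Move cycles. In Look a robot takes an instantaneous snapshot of the positions (and visible lights, if any) of the robots it can see. In Compute it runs the common algorithm on the snapshot to obtain a destination. In Move it moves there. Models: - $\mathcal{OBLOT}$: robots are oblivious (no memory of previous cycles) and silent (no means of communication). - $\mathcal{LUMI}$: each robot carries a persistent light whose color is taken from a finite set and is set at the end of Compute; the light is visible to the robot itself and to the other robots. - $\mathcal{FSTA}$: the light is internal, visible only to its owner. It acts as a finite persistent state; there is no communication. - $\mathcal{FCOM}$: the light is visible only to the other robots. A robot does not see its own light and is otherwise oblivious. Schedulers: time is divided into rounds. Under the semi-synchronous scheduler $S$ (SSYNCH), in each round an adversarially chosen set of robots is activated and they perform one full cycle in perfect synchronization; every robot is activated infinitely often. Under the fully synchronous scheduler $F$ (FSYNCH), every robot is activated in every round. Visibility: - Full visibility $\mathcal{F.V.}$: every robot sees all robots. - Limited visibility $\mathcal{L.V.}$: a robot sees only the robots within a fixed distance $V_r$ of its current position, with $V_r$ the same for all robots. The visibility graph (robots adjacent iff they see each other) of the initial configuration is assumed connected. Relations: $\mathcal{M}^X_V$ denotes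 model $\mathcal{M}$ under scheduler $X$ with visibility $V$. For a team $R$ of robots, $Task(\mathcal{M},X,V;R)$ is the set of problems (tasks where robots must form some configuration(s) subject to conditions) solvable by $R$ in that setting. $\mathcal{R}$ is the set of all teams, and $\mathcal{R}_n$ the set of teams of size $n$. - $\mathcal{M}^{X_1}_{V_1} \ge \mathcal{N}^{X_2}_{V_2}$ if for all $R\in\mathcal{R}$, $Task(\mathcal{M},X_1,V_1;R)\supseteq Task(\mathcal{N},X_2,V_2;R)$. - $>$ means $\ge$ holds and there exists $R\in\mathcal{R}$ with $Task(\mathcal{M},X_1,V_1;R)\setminus Task(\mathcal{N},X_2,V_2;R)\neq\emptyset$. - $\perp$ (incomparable) means there exist $R_1,R_2\in\mathcal{R}$ with $Task(\mathcal{M},X_1,V_1;R_1)\setminus Task(\mathcal{N},X_2,V_2;R_1)\neq\emptyset$ and $Task(\mathcal{N},X_2,V_2;R_2)\setminus Task(\mathcal{M},X_1,V_1;R_2)\neq\emptyset$. *)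

From Stdlib Require Import Reals List Permutation Arith Bool.
Open Scope R_scope.

Definition point : Type := (R * R)%type.
Definition color : Type := nat.

Definition padd (p q : point) : point := (fst p + fst q, snd p + snd q).
Definition psub (p q : point) : point := (fst p - fst q, snd p - snd q).
Definition dist (p q : point) : R :=
  sqrt ((fst p - fst q) ^ 2 + (snd p - snd q) ^ 2).

(** A local coordinate system (up to the origin, which is always the robot's
    current position): an arbitrary positive unit of length [fr_scale], an
    arbitrary orientation of the axes ([fr_cos], [fr_sin]) and an arbitrary
    handedness ([fr_refl] = true means the opposite chirality). *)
Record frame := { fr_scale : R; fr_cos : R; fr_sin : R; fr_refl : bool }.

Definition frame_valid (f : frame) : Prop :=
  0 < fr_scale f /\ fr_cos f ^ 2 + fr_sin f ^ 2 = 1.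

Definition to_local (f : frame) (v : point) : point :=
  let x := fst v in let y := snd v in
  let c := fr_cos f in let s := fr_sin f in let k := fr_scale f in
  if fr_refl f then (k * (c * x + s * y), k * (s * x - c * y))
  else (k * (c * x - s * y), k * (s * x + c * y)).

Definition to_global (f : frame) (w : point) : point :=
  let x := fst w / fr_scale f in let y := snd w / fr_scale f in
  let c := fr_cos f in let s := fr_sin f in
  if fr_refl f then (c * x + s * y, s * x - c * y)
  else (c * x + s * y, - s * x + c * y).

Inductive visibility := FullVis | LimitedVis.
Inductive scheduler := SSync | FSync.

Record team := { t_size : nat; t_range : R }.
Definition team_valid (T : team) : Prop := (1 <= t_size T)%nat /\ 0 < t_range T.

Definition seesb (V : visibility) (T : team) (p q : point) : bool :=
  match V with
  | FullVis => true
  | LimitedVis => if Rle_dec (dist p q) (t_range T) then true else false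
  end.

(** Snapshot of the other visible robots: their positions in the local frame
    of the observer (which is at its own origin) together with their lights. *)
Definition snapshot := list (point * color).

(** The common algorithm: input = visibility radius in local units, own light
    (visible to itself in LUMI), snapshot; output = destination in local
    coordinates and new light. *)
Definition algorithm := R -> color -> snapshot -> (point * color)%type.

(** Robots are anonymous: the output cannot depend on the order in which the
    observed robots are listed. *)
Definition perm_invariant (A : algorithm) : Prop :=
  forall v c s s', Permutation s s' -> A v c s = A v c s'.

Definition uses_colors (k : nat) (A : algorithm) : Prop :=
  forall v c s, (snd (A v c s) < k)%nat.

Definition config := ((nat -> point) * (nat -> color))%type.

Definition snap (V : visibility) (T : team) (fr : frame)
  (pos : nat -> point) (col : nat -> color) (i : nat) : snapshot :=
  map (fun j => (to_local fr (psub (pos j) (pos i)), col j))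
      (filter (fun j => andb (negb (Nat.eqb j i)) (seesb V T (pos i) (pos j)))
              (seq 0 (t_size T))).

Definition step (V : visibility) (T : team) (A : algorithm)
  (frames : nat -> frame) (active : nat -> bool) (c : config) : config :=
  let pos := fst c in let col := snd c in
  let out i := A (fr_scale (frames i) * t_range T) (col i)
                 (snap V T (frames i) pos col i) in
  let on i := andb (active i) (Nat.ltb i (t_size T)) in
  (fun i => if on i then padd (pos i) (to_global (frames i) (fst (out i))) else pos i,
   fun i => if on i then snd (out i) else col i).

Fixpoint exec (V : visibility) (T : team) (A : algorithm) (frames : nat -> frame)
  (act : nat -> nat -> bool) (init : nat -> point) (t : nat) : config :=
  match t with
  | O => (init, fun _ => 0%nat)
  | S t' => step V T A frames (act t') (exec V T A frames act init t')
  end.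

Definition sched_ok (X : scheduler) (T : team) (act : nat -> nat -> bool) : Prop :=
  match X with
  | FSync => forall t i, (i < t_size T)%nat -> act t i = true
  | SSync => forall i, (i < t_size T)%nat ->
               forall t, exists t', (t <= t')%nat /\ act t' i = true
  end.

Inductive vis_reach (T : team) (p : nat -> point) : nat -> nat -> Prop :=
  | vr_refl i : vis_reach T p i i
  | vr_step i j k : vis_reach T p i j -> (k < t_size T)%nat ->
                    dist (p j) (p k) <= t_range T -> vis_reach T p i k.

Definition init_connected (T : team) (p : nat -> point) : Prop :=
  forall i j, (i < t_size T)%nat -> (j < t_size T)%nat -> vis_reach T p i j.

(** A problem (task) is a predicate on the sequence of configurations
    (positions of the robots at each round). *)
Definition problem := (nat -> nat -> point) -> Prop.

Definition LUMI_solvable (X : scheduler) (V : visibility) (T : team) (P : problem) : Prop :=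
  exists (k : nat) (A : algorithm),
    (0 < k)%nat /\ uses_colors k A /\ perm_invariant A /\
    forall (init : nat -> point) (frames : nat -> frame) (act : nat -> nat -> bool),
      init_connected T init ->
      (forall i, frame_valid (frames i)) ->
      sched_ok X T act ->
      P (fun t => fst (exec V T A frames act init t)).

Definition LUMI_ge (X1 : scheduler) (V1 : visibility) (X2 : scheduler) (V2 : visibility) : Prop :=
  forall T : team, team_valid T ->
    forall P : problem, LUMI_solvable X2 V2 T P -> LUMI_solvable X1 V1 T P.

Definition LUMI_gt (X1 : scheduler) (V1 : visibility) (X2 : scheduler) (V2 : visibility) : Prop :=
  LUMI_ge X1 V1 X2 V2 /\
  exists T : team, team_valid T /\
    exists P : problem, LUMI_solvable X1 V1 T P /\ ~ LUMI_solvable X2 V2 T P.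

From Pilot Require Import Defs.
From Stdlib Require Import Reals List Permutation Lra Lia Bool.
From Stdlib Require Import Classical FunctionalExtensionality.
Open Scope R_scope.

(* A robot with full visibility simulates one with limited visibility by discarding
   from its snapshot the robots farther than V_r (measured in its own unit of length),
   so every problem solvable with limited visibility stays solvable.

   For strictness, take the problem "never move if two robots start more than
   sqrt 6 V_r apart, otherwise eventually move".  With full visibility every robot
   reads the condition off a single snapshot.  With limited visibility it is
   unsolvable: four robots on a zigzag (endpoints sqrt 7.4 apart) and on a U
   (endpoints sqrt 4.84 apart) differ only by reflecting the last robot across the
   line through the two middle ones, so if the last two robots of the U use mirrored
   frames every robot sees exactly what it sees in the zigzag.  Activating all
   robots in every round, the zigzag execution never moves, hence the U execution
   replays it snapshot for snapshot and never moves either. *)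

Lemma Permutation_filter {A} (g : A -> bool) (l l' : list A) :
  Permutation l l' -> Permutation (filter g l) (filter g l').
Proof.
  induction 1 as [| x l l' _ IH | x y l | l l' l'' _ IH1 _ IH2]; simpl.
  - constructor.
  - destruct (g x); auto.
  - destruct (g x), (g y); auto using perm_swap.
  - eapply perm_trans; eauto.
Qed.

Lemma Permutation_existsb {A} (g : A -> bool) (l l' : list A) :
  Permutation l l' -> existsb g l = existsb g l'.
Proof.
  induction 1 as [| x l l' _ IH | x y l | l l' l'' _ IH1 _ IH2]; simpl; auto.
  - now rewrite IH.
  - now destruct (g x), (g y).
  - congruence.
Qed.

Lemma filter_filter {A} (g h : A -> bool) (l : list A) :
  filter g (filter h l) = filter (fun x => h x && g x) l.
Proof.
  induction l as [|a l IH]; simpl; auto.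
  destruct (h a) eqn:Eh; simpl; [destruct (g a)|]; now rewrite IH.
Qed.

Definition sqd (a b : point) : R := (fst a - fst b) ^ 2 + (snd a - snd b) ^ 2.

Lemma sqd_sym a b : sqd a b = sqd b a.
Proof. unfold sqd; ring. Qed.

Lemma dist_le_iff p q r : 0 <= r -> Defs.dist p q <= r <-> sqd p q <= r ^ 2.
Proof.
  intros Hr. change (Defs.dist p q) with (sqrt (sqd p q)).
  assert (Hs : 0 <= sqd p q) by (unfold sqd; apply Rplus_le_le_0_compat; apply pow2_ge_0).
  split; intros H.
  - apply sqrt_le_0; [lra | nra |]. now rewrite sqrt_pow2.
  - rewrite <- (sqrt_pow2 r Hr). now apply sqrt_le_1_alt.
Qed.

Lemma dist_sym p q : Defs.dist p q = Defs.dist q p.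
Proof. unfold Defs.dist; f_equal; ring. Qed.

Lemma psub_diag p : psub p p = (0, 0).
Proof. unfold psub; f_equal; ring. Qed.

Lemma sqd_psub a b c : sqd (psub a c) (psub b c) = sqd a b.
Proof. unfold sqd, psub; simpl; ring. Qed.

Lemma to_local_origin f : to_local f (0, 0) = (0, 0).
Proof. unfold to_local; destruct (fr_refl f); simpl; f_equal; ring. Qed.

Lemma sqd_to_local f u w : frame_valid f ->
  sqd (to_local f u) (to_local f w) = fr_scale f ^ 2 * sqd u w.
Proof.
  intros [_ Hcs]. unfold sqd, to_local.
  destruct (fr_refl f); simpl;
    transitivity (fr_scale f ^ 2 * (fr_cos f ^ 2 + fr_sin f ^ 2) * sqd u w);
    unfold sqd; try ring; rewrite Hcs; ring.
Qed.

Lemma sqd_to_local_le f u w r : frame_valid f ->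
  sqd (to_local f u) (to_local f w) <= (fr_scale f * r) ^ 2 <-> sqd u w <= r ^ 2.
Proof.
  intros Hf. rewrite sqd_to_local by exact Hf. destruct Hf as [Hk _].
  assert (0 < fr_scale f ^ 2) by nra. split; nra.
Qed.

Lemma sqd_to_local_far f u w r : frame_valid f ->
  6 * (fr_scale f * r) ^ 2 < sqd (to_local f u) (to_local f w) <-> 6 * r ^ 2 < sqd u w.
Proof.
  intros Hf. rewrite sqd_to_local by exact Hf. destruct Hf as [Hk _].
  assert (0 < fr_scale f ^ 2) by nra. split; nra.
Qed.

Lemma to_local_to_global f w : frame_valid f -> to_local f (to_global f w) = w.
Proof.
  intros [Hk Hcs]. destruct w as [x y]. unfold to_local, to_global.
  destruct (fr_refl f); simpl; f_equal;
    match goal with |- _ = ?z => transitivity ((fr_cos f ^ 2 + fr_sin f ^ 2) * z) end;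
    try (rewrite Hcs; ring); field; lra.
Qed.

Lemma padd_to_global_origin f p : padd p (to_global f (0, 0)) = p.
Proof.
  destruct p; unfold padd, to_global, Rdiv; destruct (fr_refl f); simpl; f_equal; ring.
Qed.

Lemma padd_to_global_fixed f p w : frame_valid f ->
  padd p (to_global f w) = p <-> w = (0, 0).
Proof.
  intros Hf. split; intros H.
  - assert (Hg : to_global f w = (0, 0)).
    { destruct p, (to_global f w); unfold padd in H; simpl in H.
      injection H; intros; f_equal; lra. }
    now rewrite <- (to_local_to_global f w Hf), Hg, to_local_origin.
  - subst w; apply padd_to_global_origin.
Qed.

Definition within (v : R) (w : point) : bool :=
  if Rle_dec (sqd w (0, 0)) (v ^ 2) then true else false.

Definition restrict_view (A : algorithm) : algorithm :=
  fun v c s => A v c (filter (fun e => within v (fst e)) s).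

Lemma seesb_limited T p q : 0 <= t_range T ->
  seesb LimitedVis T p q = if Rle_dec (sqd p q) (t_range T ^ 2) then true else false.
Proof.
  intros Hr. simpl.
  destruct (Rle_dec (Defs.dist p q) _) as [h|h], (Rle_dec (sqd p q) _) as [h'|h'];
    rewrite dist_le_iff in h by exact Hr; tauto.
Qed.

Lemma within_to_local T f p q : frame_valid f -> 0 < t_range T ->
  within (fr_scale f * t_range T) (to_local f (psub q p)) = seesb LimitedVis T p q.
Proof.
  intros Hf Hr. unfold within. rewrite seesb_limited by lra.
  rewrite <- (to_local_origin f), <- (psub_diag p), sqd_sym.
  destruct (Rle_dec _ _) as [h|h], (Rle_dec _ _) as [h'|h'];
    rewrite sqd_to_local_le, sqd_psub in h by exact Hf; tauto.
Qed.

Lemma restrict_full_snap T f pos col i : frame_valid f -> 0 < t_range T ->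
  filter (fun e => within (fr_scale f * t_range T) (fst e)) (snap FullVis T f pos col i)
  = snap LimitedVis T f pos col i.
Proof.
  intros Hf Hr. unfold snap. rewrite filter_map_swap, filter_filter. f_equal.
  apply filter_ext; intros j; simpl. now rewrite andb_true_r, within_to_local.
Qed.

Lemma exec_restrict_view T A frames act init :
  0 < t_range T -> (forall i, frame_valid (frames i)) ->
  forall t, exec FullVis T (restrict_view A) frames act init t
            = exec LimitedVis T A frames act init t.
Proof.
  intros Hr Hf t. induction t as [|t IH]; simpl; auto.
  rewrite IH. unfold step, restrict_view.
  f_equal; apply functional_extensionality; intros i; now rewrite restrict_full_snap.
Qed.

Lemma LUMI_ge_full_limited X : LUMI_ge X FullVis X LimitedVis.
Proof.
  intros T [_ Hr] P [k [A [Hk [Hcol [Hperm Hsolves]]]]].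
  exists k, (restrict_view A). split; [exact Hk | split; [| split]].
  - intros v c s. apply Hcol.
  - intros v c s s' Hs. apply Hperm, Permutation_filter, Hs.
  - intros init frames act Hinit Hf Hsched.
    replace (fun t => fst (exec FullVis T (restrict_view A) frames act init t))
      with (fun t => fst (exec LimitedVis T A frames act init t)); auto.
    apply functional_extensionality; intros t. now rewrite exec_restrict_view.
Qed.

Definition has_far_pair (T : team) (p : nat -> point) : Prop :=
  exists a b, (a < t_size T)%nat /\ (b < t_size T)%nat /\ 6 * t_range T ^ 2 < sqd (p a) (p b).

Definition freeze_iff_far (T : team) : problem := fun traj =>
  (has_far_pair T (traj 0%nat) -> forall t i, traj t i = traj 0%nat i) /\
  (~ has_far_pair T (traj 0%nat) -> exists t i, traj t i <> traj 0%nat i).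

Definition far (v : R) (a b : point) : bool :=
  if Rlt_dec (6 * v ^ 2) (sqd a b) then true else false.

Definition far_pairb (v : R) (ws : list point) : bool :=
  existsb (fun a => existsb (far v a) ws) ws.

(* [(0, 0)] is the observer itself, which [snap] leaves out. *)
Definition freeze_if_far : algorithm := fun v _ s =>
  if far_pairb v ((0, 0) :: map fst s) then ((0, 0), 0%nat) else ((1, 0), 0%nat).

Lemma far_true_iff v a b : far v a b = true <-> 6 * v ^ 2 < sqd a b.
Proof. unfold far; destruct (Rlt_dec _ _); split; congruence || tauto. Qed.

Lemma far_pairb_perm v ws ws' : Permutation ws ws' -> far_pairb v ws = far_pairb v ws'.
Proof.
  intros H. unfold far_pairb. rewrite (Permutation_existsb _ _ _ H).
  f_equal; apply functional_extensionality; intros a. now apply Permutation_existsb.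
Qed.

Lemma freeze_if_far_perm : perm_invariant freeze_if_far.
Proof.
  intros v c s s' H. unfold freeze_if_far.
  now rewrite (far_pairb_perm v _ ((0, 0) :: map fst s')) by auto using Permutation_map.
Qed.

Lemma in_full_view T f pos col i w : (i < t_size T)%nat ->
  In w ((0, 0) :: map fst (snap FullVis T f pos col i)) <->
  exists j, (j < t_size T)%nat /\ w = to_local f (psub (pos j) (pos i)).
Proof.
  intros Hi. unfold snap. rewrite map_map; simpl. split.
  - intros [<- | Hw].
    + exists i. now rewrite psub_diag, to_local_origin.
    + apply in_map_iff in Hw as [j [<- Hj]].
      apply filter_In in Hj as [Hj _]. apply in_seq in Hj.
      exists j. split; [lia | reflexivity].
  - intros [j [Hj ->]]. destruct (Nat.eq_dec j i) as [->|Hne].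
    + left. now rewrite psub_diag, to_local_origin.
    + right. apply in_map_iff. exists j. split; auto.
      apply filter_In. split; [apply in_seq; lia|].
      apply Nat.eqb_neq in Hne. now rewrite Hne.
Qed.

Lemma far_pairb_full_view T f pos col i : frame_valid f -> (i < t_size T)%nat ->
  far_pairb (fr_scale f * t_range T) ((0, 0) :: map fst (snap FullVis T f pos col i)) = true
  <-> has_far_pair T pos.
Proof.
  intros Hf Hi. unfold far_pairb. rewrite existsb_exists. split.
  - intros [a [Ha Hb]]. apply existsb_exists in Hb as [b [Hb Hab]].
    apply in_full_view in Ha as [ja [Hja ->]]; auto.
    apply in_full_view in Hb as [jb [Hjb ->]]; auto.
    rewrite far_true_iff, sqd_to_local_far, sqd_psub in Hab by exact Hf.
    now exists ja, jb.
  - intros [ja [jb [Hja [Hjb Hab]]]].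
    exists (to_local f (psub (pos ja) (pos i))). split; [apply in_full_view; eauto|].
    apply existsb_exists. exists (to_local f (psub (pos jb) (pos i))).
    split; [apply in_full_view; eauto|].
    now rewrite far_true_iff, sqd_to_local_far, sqd_psub by exact Hf.
Qed.

Lemma freeze_if_far_output T f c pos col i : frame_valid f -> (i < t_size T)%nat ->
  fst (freeze_if_far (fr_scale f * t_range T) c (snap FullVis T f pos col i)) = (0, 0)
  <-> has_far_pair T pos.
Proof.
  intros Hf Hi. rewrite <- (far_pairb_full_view T f pos col i Hf Hi).
  unfold freeze_if_far. destruct (far_pairb _ _); simpl; split; try easy.
  intros H; injection H; lra.
Qed.

Lemma freeze_if_far_step_far T frames a pos col :
  (forall i, frame_valid (frames i)) -> has_far_pair T pos ->
  fst (step FullVis T freeze_if_far frames a (pos, col)) = pos.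
Proof.
  intros Hf Hfar. apply functional_extensionality; intros i. unfold step; simpl.
  destruct (a i && (i <? t_size T))%bool eqn:Hon; [|reflexivity].
  apply andb_prop in Hon as [_ Hi]. apply Nat.ltb_lt in Hi.
  apply padd_to_global_fixed; [apply Hf|]. now apply freeze_if_far_output.
Qed.

Lemma freeze_if_far_step_near T frames a pos col i :
  frame_valid (frames i) -> a i = true -> (i < t_size T)%nat -> ~ has_far_pair T pos ->
  fst (step FullVis T freeze_if_far frames a (pos, col)) i <> pos i.
Proof.
  intros Hf Ha Hi Hnear. unfold step; simpl.
  rewrite Ha, (proj2 (Nat.ltb_lt _ _) Hi); simpl.
  rewrite padd_to_global_fixed, freeze_if_far_output by assumption. exact Hnear.
Qed.

Lemma exec_freeze_if_far_static T frames act init :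
  (forall i, frame_valid (frames i)) -> has_far_pair T init ->
  forall t, fst (exec FullVis T freeze_if_far frames act init t) = init.
Proof.
  intros Hf Hfar t. induction t as [|t IH]; [reflexivity|]. simpl.
  rewrite (surjective_pairing (exec _ _ _ _ _ _ t)), IH.
  now apply freeze_if_far_step_far.
Qed.

Lemma exec_freeze_if_far_moves T frames act init :
  (1 <= t_size T)%nat -> (forall i, frame_valid (frames i)) -> sched_ok SSync T act ->
  ~ has_far_pair T init ->
  exists t i, fst (exec FullVis T freeze_if_far frames act init t) i <> init i.
Proof.
  intros Hn Hf Hsched Hnear. apply NNPP; intros Hstill.
  assert (Hstatic : forall t, fst (exec FullVis T freeze_if_far frames act init t) = init).
  { intros t. apply functional_extensionality; intros i.
    apply NNPP; intros Hmove. apply Hstill. now exists t, i. }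
  destruct (Hsched 0%nat ltac:(lia) 0%nat) as [t [_ Hact]].
  apply (freeze_if_far_step_near T frames (act t) init
           (snd (exec FullVis T freeze_if_far frames act init t)) 0);
    [apply Hf | exact Hact | lia | exact Hnear |].
  rewrite <- (Hstatic t) at 1. rewrite <- surjective_pairing.
  exact (f_equal (fun p => p 0%nat) (Hstatic (S t))).
Qed.

Lemma freeze_iff_far_full_solvable T :
  (1 <= t_size T)%nat -> LUMI_solvable SSync FullVis T (freeze_iff_far T).
Proof.
  intros Hn. exists 1%nat, freeze_if_far.
  split; [lia | split; [| split]].
  - intros v c s. unfold freeze_if_far. destruct (far_pairb _ _); simpl; lia.
  - exact freeze_if_far_perm.
  - intros init frames act _ Hf Hsched. split; simpl.
    + intros Hfar t i. now rewrite exec_freeze_if_far_static.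
    + now apply exec_freeze_if_far_moves.
Qed.

Lemma vis_reach_trans T p i j k : vis_reach T p i j -> vis_reach T p j k -> vis_reach T p i k.
Proof.
  intros Hij Hjk. revert Hij.
  induction Hjk as [m | m j' k' _ IH Hk Hd]; intros Hij; auto.
  apply vr_step with j'; auto.
Qed.

Lemma chain_connected T p :
  (forall i, (S i < t_size T)%nat -> Defs.dist (p i) (p (S i)) <= t_range T) ->
  init_connected T p.
Proof.
  intros Hchain.
  assert (Hup : forall j, (j < t_size T)%nat -> vis_reach T p 0 j).
  { induction j as [|j IH]; intros Hj; [constructor|].
    apply vr_step with j; [apply IH; lia | exact Hj | apply Hchain, Hj]. }
  assert (Hdown : forall i, (i < t_size T)%nat -> vis_reach T p i 0).
  { induction i as [|i IH]; intros Hi; [constructor|].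
    apply vis_reach_trans with i.
    - apply vr_step with (S i); [constructor | lia |]. rewrite dist_sym. apply Hchain, Hi.
    - apply IH; lia. }
  intros i j Hi Hj. apply vis_reach_trans with 0%nat; auto.
Qed.

Lemma snap_ext V T f1 f2 p1 p2 col i :
  (forall j, (j < t_size T)%nat -> seesb V T (p1 i) (p1 j) = seesb V T (p2 i) (p2 j)) ->
  (forall j, (j < t_size T)%nat -> j <> i -> seesb V T (p1 i) (p1 j) = true ->
     to_local f1 (psub (p1 j) (p1 i)) = to_local f2 (psub (p2 j) (p2 i))) ->
  snap V T f1 p1 col i = snap V T f2 p2 col i.
Proof.
  intros Hsees Hlocal. unfold snap.
  rewrite (filter_ext_in _ (fun j => negb (j =? i)%nat && seesb V T (p2 i) (p2 j))%bool).
  - apply map_ext_in. intros j Hj.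
    apply filter_In in Hj as [Hj Hb]. apply in_seq in Hj.
    apply andb_prop in Hb as [Hne Hb]. apply negb_true_iff, Nat.eqb_neq in Hne.
    rewrite Hlocal; auto; [lia | rewrite Hsees; auto; lia].
  - intros j Hj. apply in_seq in Hj. rewrite Hsees; auto. lia.
Qed.

Lemma exec_indistinguishable_static V T A frames1 frames2 act p1 p2 :
  (forall i, frame_valid (frames1 i)) ->
  (forall i, fr_scale (frames1 i) = fr_scale (frames2 i)) ->
  (forall col i, (i < t_size T)%nat ->
     snap V T (frames1 i) p1 col i = snap V T (frames2 i) p2 col i) ->
  (forall t, fst (exec V T A frames1 act p1 t) = p1) ->
  forall t, exec V T A frames2 act p2 t = (p2, snd (exec V T A frames1 act p1 t)).
Proof.
  intros Hf Hscale Hsnap Hstatic t. induction t as [|t IH]; [reflexivity|].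
  pose proof (Hstatic (S t)) as Hstill. simpl exec in Hstill |- *.
  rewrite IH. rewrite (surjective_pairing (exec V T A frames1 act p1 t)), Hstatic in Hstill |- *.
  unfold step in Hstill |- *; simpl in Hstill |- *.
  f_equal; apply functional_extensionality; intros i;
    destruct (act t i && (i <? t_size T))%bool eqn:Hon; try reflexivity;
    assert (Hi : (i < t_size T)%nat) by (apply andb_prop in Hon as [_ Hi]; now apply Nat.ltb_lt);
    rewrite <- Hscale, <- Hsnap by exact Hi; [|reflexivity].
  apply (f_equal (fun p => p i)) in Hstill; simpl in Hstill; rewrite Hon in Hstill.
  apply padd_to_global_fixed in Hstill; [|apply Hf].
  rewrite Hstill. apply padd_to_global_origin.
Qed.

Definition four_robots : team := {| t_size := 4; t_range := 1 |}.

Definition zigzag (i : nat) : point :=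
  match i with 0 => (-3/5, 4/5) | 1 => (0, 0) | 2 => (1, 0) | _ => (8/5, -4/5) end.
Definition u_shape (i : nat) : point :=
  match i with 0 => (-3/5, 4/5) | 1 => (0, 0) | 2 => (1, 0) | _ => (8/5, 4/5) end.

Definition id_frame : frame := {| fr_scale := 1; fr_cos := 1; fr_sin := 0; fr_refl := false |}.
Definition mirror_frame : frame := {| fr_scale := 1; fr_cos := 1; fr_sin := 0; fr_refl := true |}.
Definition u_frames (i : nat) : frame := if (i <? 2)%nat then id_frame else mirror_frame.

Lemma id_frame_valid : frame_valid id_frame.
Proof. split; simpl; lra. Qed.

Lemma zigzag_connected : init_connected four_robots zigzag.
Proof.
  apply chain_connected; simpl; intros i Hi.
  destruct i as [|[|[|i]]]; try lia; apply dist_le_iff; unfold sqd; simpl; lra.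
Qed.

Lemma u_shape_connected : init_connected four_robots u_shape.
Proof.
  apply chain_connected; simpl; intros i Hi.
  destruct i as [|[|[|i]]]; try lia; apply dist_le_iff; unfold sqd; simpl; lra.
Qed.

Lemma zigzag_far : has_far_pair four_robots zigzag.
Proof. exists 0%nat, 3%nat; simpl; split; [lia | split; [lia |]]. unfold sqd; simpl; lra. Qed.

Lemma u_shape_near : ~ has_far_pair four_robots u_shape.
Proof.
  intros [a [b [Ha [Hb Hab]]]]; simpl in Ha, Hb.
  destruct a as [|[|[|[|a]]]]; try lia; destruct b as [|[|[|[|b]]]]; try lia;
    unfold sqd in Hab; simpl in Hab; lra.
Qed.

Ltac decide_Rle :=
  repeat match goal with
  | |- context [Rle_dec ?a ?b] => destruct (Rle_dec a b)
  | H : context [Rle_dec ?a ?b] |- _ => destruct (Rle_dec a b)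
  end.

Lemma zigzag_u_shape_snap col i : (i < 4)%nat ->
  snap LimitedVis four_robots id_frame zigzag col i
  = snap LimitedVis four_robots (u_frames i) u_shape col i.
Proof.
  intros Hi. apply snap_ext; intros j Hj; rewrite !seesb_limited by (simpl; lra); simpl in Hj.
  - destruct i as [|[|[|[|i]]]]; try lia; destruct j as [|[|[|[|j]]]]; try lia;
      unfold sqd; simpl; decide_Rle; solve [reflexivity | lra].
  - intros Hne Hsees.
    destruct i as [|[|[|[|i]]]]; try lia; destruct j as [|[|[|[|j]]]]; try lia;
      try congruence; unfold sqd in Hsees; simpl in Hsees;
      decide_Rle; try discriminate; try lra;
      unfold to_local, psub; simpl; f_equal; lra.
Qed.

Lemma freeze_iff_far_limited_unsolvable :
  ~ LUMI_solvable SSync LimitedVis four_robots (freeze_iff_far four_robots).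
Proof.
  intros [k [A [_ [_ [_ Hsolves]]]]].
  set (act := fun _ _ : nat => true).
  assert (Hact : sched_ok SSync four_robots act) by (intros i _ t; now exists t).
  assert (Hu_valid : forall i, frame_valid (u_frames i)).
  { intros i; unfold u_frames; destruct (i <? 2)%nat; split; simpl; lra. }
  destruct (Hsolves zigzag (fun _ => id_frame) act) as [Hzigzag _];
    auto using zigzag_connected, id_frame_valid.
  destruct (Hsolves u_shape u_frames act) as [_ Hu]; auto using u_shape_connected.
  simpl in Hzigzag, Hu.
  assert (Hu_static := exec_indistinguishable_static LimitedVis four_robots A
    (fun _ => id_frame) u_frames act zigzag u_shape (fun _ => id_frame_valid)).
  destruct (Hu u_shape_near) as [t [i Hmove]]. apply Hmove.
  rewrite Hu_static; [reflexivity | | |].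
  - intros i'; unfold u_frames; now destruct (i' <? 2)%nat.
  - exact zigzag_u_shape_snap.
  - intros t'. apply functional_extensionality; intros j. exact (Hzigzag zigzag_far t' j).
Qed.

Theorem theorem8 : LUMI_gt SSync FullVis SSync LimitedVis.
Proof.
  split; [apply LUMI_ge_full_limited |].
  exists four_robots. split; [split; simpl; [lia | lra] |].
  exists (freeze_iff_far four_robots). split.
  - apply freeze_iff_far_full_solvable. simpl; lia.
  - exact freeze_iff_far_limited_unsolvable.
Qed.
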